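(* Let $((P,\omega),B)\in \mathrm{Gr}^{\rm po}_{2,1}(\Gamma_{\mathbb R})\times\Gamma_{\mathbb R}$ with $\omega,B\in\Gamma'_{\mathbb R}\oplus\mathbb R v$. Then there is $\sigma\in\Gamma_{\mathbb C}$ with $P=P_\sigma$, $\langle\mathrm{Im}(\sigma),v\rangle=0$ and $\langle\mathrm{Re}(\sigma),v\rangle\neq0$. Define $$\sigma^{\vee}:=\frac{1}{\langle \mathrm{Re}(\sigma),v\rangle}\Big(\mathrm{pr}(B+i\omega)-\tfrac12(B+i\omega)^2v+v^*\Big),$$ $$B^{\vee}+i\omega^{\vee}:=\frac{1}{\langle \mathrm{Re}(\sigma),v\rangle}\Big(\mathrm{pr}(\sigma)-\langle\sigma,B\rangle v\Big),$$ with $B^\vee,\omega^\vee\in\Gamma_{\mathbb R}$. Then: - $((P_{\sigma^\vee},\omega^\vee),B^\vee)\in \mathrm{Gr}^{\rm po}_{2,1}(\Gamma_{\mathbb R})\times\Gamma_{\mathbb R}$; - $\tilde\xi(\gamma((P,\omega),B))=\gamma((P_{\sigma^\vee},\omega^\vee),B^\vee)$. In particular, the $\tilde\xi$-mirror of a point of $\gamma(\mathrm{Gr}^{\rm po}_{2,1}(\Gamma_{\mathbb R})\times\Gamma_{\mathbb R})$ satisfying these hypotheses again lies in $\gamma(\mathrm{Gr}^{\rm po}_{2,1}(\Gamma_{\mathbb R})\times\Gamma_{\mathbb R})$.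
   Context: $\Gamma$ is a lattice of signature $(3,b-3)$ with a fixed orthogonal splitting $\Gamma=\Gamma'\oplus U'$, where $U'$ is a hyperbolic plane. $U$ is a further hyperbolic plane with standard basis $(w,w^* )$ ($w^2={w^*}^2=0$, $\langle w,w^*\rangle=1$). An isometry $U'\cong U$ is fixed, and $(v,v^* )$ is the basis of $U'$ corresponding to $(w,w^* )$. $\mathrm{pr}:\Gamma_{\mathbb R}\to\Gamma'_{\mathbb R}$ is the orthogonal projection, extended complex-linearly. The form is extended complex-bilinearly to $\Gamma_{\mathbb C}$. For $\sigma\in\Gamma_{\mathbb C}$ with $\sigma^2=0$ and $(\sigma+\bar\sigma)^2>0$, $P_\sigma$ is the plane spanned by $\mathrm{Re}\,\sigma,\mathrm{Im}\,\sigma$, oriented by this basis. $\mathrm{Gr}^{\rm po}_{2,1}(\Gamma_{\mathbb R})=\{(P,\omega): P$ an oriented positive definite plane in $\Gamma_{\mathbb R}$, $\omega\in P^\perp$, $\omega^2>0\}$. $\mathrm{Gr}^{\rm po}_{2,2}(\Gamma_{\mathbb R}\oplus U_{\mathbb R})$ is the set of pairs $(H_1,H_2)$ of orthogonal oriented positive definite planes in $\Gamma_{\mathbb R}\oplus U_{\mathbb R}$. The map $\gamma:\mathrm{Gr}^{\rm po}_{2,1}(\Gamma_{\mathbb R})\times\Gamma_{\mathbb R}\to \mathrm{Gr}^{\rm po}_{2,2}(\Gamma_{\mathbb R}\oplus U_{\mathbb R})$ sends $((P,\omega),B)$ to $(H_1,H_2)$ where: - $H_1=\{x-\langle x,B\rangle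 w: x\in P\}$, oriented via $P$; - $H_2$ has the ordered basis $\big(\tfrac12(\omega^2-B^2)w+w^*+B,\ \omega-\langle\omega,B\rangle w\big)$. $\xi\in \mathrm O(\Gamma\oplus U)$ is the identity on $\Gamma'$ and interchanges $U$ and $U'$: $v\leftrightarrow w$, $v^*\leftrightarrow w^*$. $\iota(H_1,H_2)=(H_2,H_1)$. The mirror map is $\tilde\xi=\iota\circ\xi$, acting on $\mathrm{Gr}^{\rm po}_{2,2}(\Gamma_{\mathbb R}\oplus U_{\mathbb R})$. *)

From HB Require Import structures.
From mathcomp Require Import all_boot all_order all_algebra.
From mathcomp Require Import complex.
Set Implicit Arguments. Unset Strict Implicit. Unset Printing Implicit Defensive.
Import Order.TTheory GRing.Theory Num.Theory.
Local Open Scope ring_scope.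
Local Open Scope complex_scope.

(* Coordinates.  Gamma = Gamma' (+) U', Gamma' of rank n with integral       *)
(* symmetric Gram matrix G, U' = Z v (+) Z v*.                               *)
(* An element of Gamma_K (K = R or C) is a row vector  row_mx x' u : 'rV_(n+2)*)
(* standing for x' + u_0 v + u_1 v*  (x' in Gamma'_K).                       *)
(* An element of (Gamma (+) U)_K is a row vector row_mx x u : 'rV_(n+2+2)    *)
(* standing for x + u_0 w + u_1 w*  (x in Gamma_K).                          *)

Notation gam K n := 'rV[K]_(n + 2).
Notation gamU K n := 'rV[K]_(n + 2 + 2).

Definition hypU (K : pzRingType) : 'M[K]_2 :=
  \matrix_(i < 2, j < 2) (if i != j then 1 else 0).

Definition gram_full (n : nat) (G : 'M[int]_n) : 'M[int]_(n + 2) :=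
  block_mx G 0 0 (hypU int).

Section Forms.
Variables (K : comNzRingType) (n : nat) (G : 'M[int]_n).

Definition intmx (m : nat) (S : 'M[int]_m) : 'M[K]_m := map_mx (fun z => z%:~R) S.

Definition gform (x y : gam K n) : K :=
  (x *m intmx (gram_full G) *m y^T) 0 0.

Definition gUform (x y : gamU K n) : K :=
  (x *m block_mx (intmx (gram_full G)) 0 0 (hypU K) *m y^T) 0 0.

Definition e0 : 'rV[K]_2 := \row_(j < 2) (if j == 0 then 1 else 0).
Definition e1 : 'rV[K]_2 := \row_(j < 2) (if j == 1 then 1 else 0).

Definition vv : gam K n := row_mx 0 e0.
Definition vvs : gam K n := row_mx 0 e1.
Definition ww : gamU K n := row_mx 0 e0.
Definition wws : gamU K n := row_mx 0 e1.
Definition embU (x : gam K n) : gamU K n := row_mx x 0.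

Definition pr (x : gam K n) : gam K n := row_mx (lsubmx x) 0.

(* xi : identity on Gamma', v <-> w, v* <-> w* *)
Definition xi (x : gamU K n) : gamU K n :=
  row_mx (row_mx (lsubmx (lsubmx x)) (rsubmx x)) (rsubmx (lsubmx x)).
End Forms.

Definition has_signature (R : realFieldType) (N p : nat) (S : 'M[R]_N) :=
  (p <= N)%N /\ S^T = S /\
  exists M : 'M[R]_N, M \in unitmx /\
    M *m S *m M^T = diag_mx (\row_(i < N) (if (i < p)%N then 1 else -1)).

Section Real.
Variables (R : rcfType) (n : nat) (G : 'M[int]_n).
Local Notation q := (@gform R n G).

Definition posdef_pair (m : nat) (f : 'rV[R]_m -> 'rV[R]_m -> R) (x y : 'rV[R]_m) :=
  forall a b : R, (a != 0) || (b != 0) ->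
    0 < f (a *: x + b *: y) (a *: x + b *: y).

Definition same_oplane (m : nat) (p1 p2 : 'rV[R]_m * 'rV[R]_m) :=
  exists a b c d : R,
    p2.1 = a *: p1.1 + b *: p1.2 /\ p2.2 = c *: p1.1 + d *: p1.2 /\
    0 < a * d - b * c.

(* ((P, omega), B) in Gr^po_{2,1}(Gamma_R) x Gamma_R, P given by an
   ordered (orienting) basis (x, y) *)
Definition in_Gr21 (x y om : gam R n) :=
  posdef_pair q x y /\ q x om = 0 /\ q y om = 0 /\ 0 < q om om.

(* gamma((P, omega), B) = (H1, H2), each given by an ordered basis *)
Definition gammaH1 (x y B : gam R n) : gamU R n * gamU R n :=
  (embU x - q x B *: ww R n, embU y - q y B *: ww R n).
Definition gammaH2 (om B : gam R n) : gamU R n * gamU R n :=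
  ((2^-1 * (q om om - q B B)) *: ww R n + wws R n + embU B,
   embU om - q om B *: ww R n).
Definition gammaG (x y om B : gam R n) :=
  (gammaH1 x y B, gammaH2 om B).

Definition same_pair (H H' : (gamU R n * gamU R n) * (gamU R n * gamU R n)) :=
  same_oplane H.1 H'.1 /\ same_oplane H.2 H'.2.

(* xi~ = iota o xi, on bases *)
Definition xi_tilde (H : (gamU R n * gamU R n) * (gamU R n * gamU R n)) :=
  ((xi H.2.1, xi H.2.2), (xi H.1.1, xi H.1.2)).

Definition ReG (s : gam R[i] n) : gam R n := map_mx (@complex.Re R) s.
Definition ImG (s : gam R[i] n) : gam R n := map_mx (@complex.Im R) s.
Definition cplx (x y : gam R n) : gam R[i] n := map2_mx (@Complex R) x y.
Definition conjG (s : gam R[i] n) : gam R[i] n := map_mx (fun z : R[i] => Complex (complex.Re z) (- complex.Im z)) s.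

(* sigma in Gamma_C with sigma^2 = 0 and (sigma + conj sigma)^2 > 0,
   so that P_sigma (ordered basis (Re sigma, Im sigma)) is defined *)
Definition period (s : gam R[i] n) :=
  gform G s s = 0 /\
  exists r : R, gform G (s + conjG s) (s + conjG s) = r%:C /\ 0 < r.

Definition sigma_dual (s : gam R[i] n) (om B : gam R n) : gam R[i] n :=
  let Z := cplx B om in
  ((q (ReG s) (vv R n))^-1)%:C *:
    (pr Z - (2^-1 * gform G Z Z) *: vv R[i] n + vvs R[i] n).
Definition Bom_dual (s : gam R[i] n) (B : gam R n) : gam R[i] n :=
  ((q (ReG s) (vv R n))^-1)%:C *:
    (pr s - gform G s (cplx B 0) *: vv R[i] n).
End Real.

(* Since P (+) R omega is a positive 3-space orthogonal to the isotropic vector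
   v, signature (3, b - 3) forbids P to be orthogonal to v as well.  Gram--Schmidt
   in P then gives an oriented conformal basis (e1, e2) of P with <e2, v> = 0 and
   r := <e1, v> <> 0, and sigma := e1 + i e2 is the required period.  The rest is
   a computation in Gamma'_R (+) U'_R (+) U_R: the real and imaginary parts of
   sigma^vee and B^vee + i omega^vee are explicit combinations of pr B, pr omega,
   pr e1, pr e2, v and v*, their Gram matrix is read off from the Gram matrix
   of e1, e2, omega, B, v and v*, and xi maps the two bases of gamma((P, omega), B)
   to 1/r times the bases of gamma((P_sigma^vee, omega^vee), B^vee) -- for H_2
   after the change of basis from (x, y) to (e1, e2).  Both base changes have
   positive determinant. *)

From HB Require Import structures.
From mathcomp Require Import all_boot all_order all_algebra.
From mathcomp Require Import complex.
From mathcomp Require Import ring lra.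
Set Implicit Arguments. Unset Strict Implicit. Unset Printing Implicit Defensive.
Import Order.TTheory GRing.Theory Num.Theory.
Local Open Scope ring_scope.

Section Form.
Variables (K : comNzRingType) (n : nat) (G : 'M[int]_n).
Local Notation q := (@gform K n G).
Local Notation vv := (vv K n).
Local Notation vvs := (vvs K n).
Implicit Types (u w z : gam K n).

Lemma gformDl u w z : q (u + w) z = q u z + q w z.
Proof. by rewrite /gform !mulmxDl mxE. Qed.
Lemma gformZl a u z : q (a *: u) z = a * q u z.
Proof. by rewrite /gform -!scalemxAl mxE. Qed.
Lemma gformDr u w z : q z (u + w) = q z u + q z w.
Proof. by rewrite /gform linearD /= mulmxDr mxE. Qed.
Lemma gformZr a u z : q z (a *: u) = a * q z u.
Proof. by rewrite /gform linearZ /= -scalemxAr mxE. Qed.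
Lemma gformNl u z : q (- u) z = - q u z.
Proof. by rewrite -scaleN1r gformZl mulN1r. Qed.
Lemma gformNr u z : q z (- u) = - q z u.
Proof. by rewrite -scaleN1r gformZr mulN1r. Qed.
Lemma gform0l z : q 0 z = 0.
Proof. by rewrite -(scale0r 0) gformZl mul0r. Qed.
Lemma gform0r z : q z 0 = 0.
Proof. by rewrite -(scale0r 0) gformZr mul0r. Qed.

Lemma gformE u w :
  q u w = \sum_j \sum_i u 0 i * intmx K (gram_full G) i j * w 0 j.
Proof.
rewrite /gform !mxE; apply: eq_bigr => j _; rewrite !mxE mulr_suml.
by apply: eq_bigr.
Qed.

Lemma gform_split u w : q u w =
  (lsubmx u *m intmx K G *m (lsubmx w)^T) 0 0
  + (rsubmx u 0 0 * rsubmx w 0 1 + rsubmx u 0 1 * rsubmx w 0 0).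
Proof.
have gramE : intmx K (gram_full G) = block_mx (intmx K G) 0 0 (hypU K).
  rewrite /intmx map_block_mx; congr block_mx; apply/matrixP => i j; rewrite !mxE //.
  by case: ifP.
rewrite -{1}[u]hsubmxK -{1}[w]hsubmxK /gform gramE mul_row_block tr_row_mx.
rewrite mul_row_col !mulmx0 ?mul0mx ?addr0 ?add0r mxE; congr (_ + _).
rewrite !mxE !big_ord_recl big_ord0 !mxE !big_ord_recl !big_ord0 !mxE /=.
have -> : (0 : 'I_2) = ord0 by apply: val_inj.
have -> : (1 : 'I_2) = lift ord0 ord0 by apply: val_inj.
ring.
Qed.

Lemma gform_vvr u : q u vv = rsubmx u 0 1.
Proof. by rewrite gform_split /vv row_mxKl row_mxKr trmx0 mulmx0 !mxE /=; ring. Qed.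
Lemma gform_vvsr u : q u vvs = rsubmx u 0 0.
Proof. by rewrite gform_split /vvs row_mxKl row_mxKr trmx0 mulmx0 !mxE /=; ring. Qed.
Lemma gform_vvl u : q vv u = rsubmx u 0 1.
Proof. by rewrite gform_split /vv row_mxKl row_mxKr !mul0mx !mxE /=; ring. Qed.
Lemma gform_vvsl u : q vvs u = rsubmx u 0 0.
Proof. by rewrite gform_split /vvs row_mxKl row_mxKr !mul0mx !mxE /=; ring. Qed.

Lemma gform_vv_vv : q vv vv = 0. Proof. by rewrite gform_vvr row_mxKr mxE. Qed.
Lemma gform_vvs_vvs : q vvs vvs = 0. Proof. by rewrite gform_vvsr row_mxKr mxE. Qed.
Lemma gform_vv_vvs : q vv vvs = 1. Proof. by rewrite gform_vvsr row_mxKr mxE. Qed.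
Lemma gform_vvs_vv : q vvs vv = 1. Proof. by rewrite gform_vvr row_mxKr mxE. Qed.

Lemma rsubmx_gam u : rsubmx u = q u vvs *: e0 K + q u vv *: e1 K.
Proof.
rewrite gform_vvr gform_vvsr; apply/rowP => -[[|[|//]] j]; rewrite !mxE /=.
  by rewrite mulr1 mulr0 addr0; congr (u 0 _); apply: val_inj.
by rewrite mulr1 mulr0 add0r; congr (u 0 _); apply: val_inj.
Qed.

Lemma lsubmx_pr u : lsubmx (pr u) = lsubmx u. Proof. by rewrite row_mxKl. Qed.
Lemma rsubmx_pr u : rsubmx (pr u) = 0. Proof. by rewrite row_mxKr. Qed.
Lemma lsubmx_vv : lsubmx vv = 0. Proof. by rewrite row_mxKl. Qed.
Lemma rsubmx_vv : rsubmx vv = e0 K. Proof. by rewrite row_mxKr. Qed.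
Lemma lsubmx_vvs : lsubmx vvs = 0. Proof. by rewrite row_mxKl. Qed.
Lemma rsubmx_vvs : rsubmx vvs = e1 K. Proof. by rewrite row_mxKr. Qed.

Lemma gform_pr_vv u : q (pr u) vv = 0. Proof. by rewrite gform_vvr rsubmx_pr mxE. Qed.
Lemma gform_pr_vvs u : q (pr u) vvs = 0. Proof. by rewrite gform_vvsr rsubmx_pr mxE. Qed.
Lemma gform_vv_pr u : q vv (pr u) = 0. Proof. by rewrite gform_vvl rsubmx_pr mxE. Qed.
Lemma gform_vvs_pr u : q vvs (pr u) = 0. Proof. by rewrite gform_vvsl rsubmx_pr mxE. Qed.

Lemma gform_prDvv_vv u a : q (pr u + a *: vv) vv = 0.
Proof. by rewrite gformDl gformZl gform_pr_vv gform_vv_vv mulr0 addr0. Qed.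

Lemma gform_pr u w : q (pr u) (pr w) = q u w - q u vvs * q w vv - q u vv * q w vvs.
Proof.
rewrite !gform_vvr !gform_vvsr !gform_split !lsubmx_pr !rsubmx_pr !mxE; ring.
Qed.

End Form.

Section BlockLinear.
Variables (K : pzRingType) (m n1 n2 : nat).
Implicit Types (A B : 'M[K]_(m, n1 + n2)).

Lemma lsubmxD A B : lsubmx (A + B) = lsubmx A + lsubmx B.
Proof. by apply/matrixP => i j; rewrite !mxE. Qed.
Lemma lsubmxN A : lsubmx (- A) = - lsubmx A.
Proof. by apply/matrixP => i j; rewrite !mxE. Qed.
Lemma lsubmxZ a A : lsubmx (a *: A) = a *: lsubmx A.
Proof. by apply/matrixP => i j; rewrite !mxE. Qed.
Lemma rsubmxD A B : rsubmx (A + B) = rsubmx A + rsubmx B.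
Proof. by apply/matrixP => i j; rewrite !mxE. Qed.
Lemma rsubmxN A : rsubmx (- A) = - rsubmx A.
Proof. by apply/matrixP => i j; rewrite !mxE. Qed.
Lemma rsubmxZ a A : rsubmx (a *: A) = a *: rsubmx A.
Proof. by apply/matrixP => i j; rewrite !mxE. Qed.

End BlockLinear.

Notation partG' H := (lsubmx (lsubmx H)).
Notation partU' H := (rsubmx (lsubmx H)).
Notation partU H := (rsubmx H).

Section FormU.
Variables (K : comNzRingType) (n : nat).
Implicit Types (u : gam K n) (H : gamU K n).

Lemma gamU_eq H H' :
  partG' H = partG' H' -> partU' H = partU' H' -> partU H = partU H' -> H = H'.
Proof.
move=> eqG' eqU' eqU.
by rewrite -[H]hsubmxK -[H']hsubmxK -[lsubmx H]hsubmxK -[lsubmx H']hsubmxK eqG' eqU' eqU.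
Qed.

Lemma partG'_embU u : partG' (embU u) = lsubmx u. Proof. by rewrite row_mxKl. Qed.
Lemma partU'_embU u : partU' (embU u) = rsubmx u. Proof. by rewrite row_mxKl. Qed.
Lemma partU_embU u : partU (embU u) = 0. Proof. by rewrite row_mxKr. Qed.
Lemma partG'_ww : partG' (ww K n) = 0. Proof. by rewrite row_mxKl linear0. Qed.
Lemma partU'_ww : partU' (ww K n) = 0. Proof. by rewrite row_mxKl linear0. Qed.
Lemma partU_ww : partU (ww K n) = e0 K. Proof. by rewrite row_mxKr. Qed.
Lemma partG'_wws : partG' (wws K n) = 0. Proof. by rewrite row_mxKl linear0. Qed.
Lemma partU'_wws : partU' (wws K n) = 0. Proof. by rewrite row_mxKl linear0. Qed.
Lemma partU_wws : partU (wws K n) = e1 K. Proof. by rewrite row_mxKr. Qed.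
Lemma partG'_xi H : partG' (xi H) = partG' H. Proof. by rewrite !row_mxKl. Qed.
Lemma partU'_xi H : partU' (xi H) = partU H. Proof. by rewrite row_mxKl row_mxKr. Qed.
Lemma partU_xi H : partU (xi H) = partU' H. Proof. by rewrite row_mxKr. Qed.

End FormU.

Section ComplexParts.
Variables (R : rcfType) (n : nat) (G : 'M[int]_n).
Local Open Scope complex_scope.
Local Notation q := (@gform R n G).
Implicit Types (u w : gam R n) (s t : gam R[i] n).

Let intC (z : int) : (z%:~R : R[i]) = (z%:~R : R)%:C.
Proof. by rewrite rmorph_int. Qed.

Lemma Re_gform s t : complex.Re (gform G s t) = q (ReG s) (ReG t) - q (ImG s) (ImG t).
Proof.
have Re_sum (I : finType) (F : I -> R[i]) :
    complex.Re (\sum_i F i) = \sum_i complex.Re (F i).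
  by apply: (big_morph (@complex.Re R)) => // -[a b] [c d].
rewrite !gformE Re_sum -sumrB; apply: eq_bigr => j _.
rewrite Re_sum -sumrB; apply: eq_bigr => i _.
rewrite !mxE intC; case: (s 0 i) => a b; case: (t 0 j) => c d /=; ring.
Qed.

Lemma Im_gform s t : complex.Im (gform G s t) = q (ReG s) (ImG t) + q (ImG s) (ReG t).
Proof.
have Im_sum (I : finType) (F : I -> R[i]) :
    complex.Im (\sum_i F i) = \sum_i complex.Im (F i).
  by apply: (big_morph (@complex.Im R)) => // -[a b] [c d].
rewrite !gformE Im_sum -big_split; apply: eq_bigr => j _.
rewrite Im_sum -big_split; apply: eq_bigr => i _.
rewrite !mxE intC; case: (s 0 i) => a b; case: (t 0 j) => c d /=; ring.
Qed.

Lemma ReGD s t : ReG (s + t) = ReG s + ReG t.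
Proof. by apply/rowP => j; rewrite !mxE; case: (s 0 j); case: (t 0 j). Qed.
Lemma ImGD s t : ImG (s + t) = ImG s + ImG t.
Proof. by apply/rowP => j; rewrite !mxE; case: (s 0 j); case: (t 0 j). Qed.
Lemma ReGB s t : ReG (s - t) = ReG s - ReG t.
Proof. by apply/rowP => j; rewrite !mxE; case: (s 0 j); case: (t 0 j). Qed.
Lemma ImGB s t : ImG (s - t) = ImG s - ImG t.
Proof. by apply/rowP => j; rewrite !mxE; case: (s 0 j); case: (t 0 j). Qed.
Lemma ReGZ (c : R[i]) s :
  ReG (c *: s) = complex.Re c *: ReG s - complex.Im c *: ImG s.
Proof. by apply/rowP => j; rewrite !mxE; case: c => a b; case: (s 0 j). Qed.
Lemma ImGZ (c : R[i]) s :
  ImG (c *: s) = complex.Re c *: ImG s + complex.Im c *: ReG s.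
Proof. by apply/rowP => j; rewrite !mxE; case: c => a b; case: (s 0 j) => c d /=; rewrite addrC. Qed.

Lemma ReG_pr s : ReG (pr s) = pr (ReG s).
Proof. by apply/rowP => k; rewrite !mxE; case: split_ordP => j _; rewrite !mxE. Qed.
Lemma ImG_pr s : ImG (pr s) = pr (ImG s).
Proof. by apply/rowP => k; rewrite !mxE; case: split_ordP => j _; rewrite !mxE. Qed.
Lemma ReG_vv : ReG (vv R[i] n) = vv R n.
Proof. by apply/rowP => k; rewrite !mxE; case: split_ordP => j _; rewrite !mxE //; case: ifP. Qed.
Lemma ImG_vv : ImG (vv R[i] n) = 0.
Proof. by apply/rowP => k; rewrite !mxE; case: split_ordP => j _; rewrite !mxE //; case: ifP. Qed.
Lemma ReG_vvs : ReG (vvs R[i] n) = vvs R n.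
Proof. by apply/rowP => k; rewrite !mxE; case: split_ordP => j _; rewrite !mxE //; case: ifP. Qed.
Lemma ImG_vvs : ImG (vvs R[i] n) = 0.
Proof. by apply/rowP => k; rewrite !mxE; case: split_ordP => j _; rewrite !mxE //; case: ifP. Qed.

Lemma ReG_cplx u w : ReG (cplx u w) = u. Proof. by apply/rowP => k; rewrite !mxE. Qed.
Lemma ImG_cplx u w : ImG (cplx u w) = w. Proof. by apply/rowP => k; rewrite !mxE. Qed.
Lemma ReG_conj s : ReG (conjG s) = ReG s. Proof. by apply/rowP => k; rewrite !mxE. Qed.
Lemma ImG_conj s : ImG (conjG s) = - ImG s. Proof. by apply/rowP => k; rewrite !mxE. Qed.

End ComplexParts.

Section Signature.
Variables (R : realFieldType) (N p : nat) (S : 'M[R]_N).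
Local Notation form u w := ((u *m S *m w^T) 0 0).

Lemma form_diag (M : 'M[R]_N) (d : 'rV[R]_N) (u : 'rV[R]_N) :
  M \in unitmx -> M *m S *m M^T = diag_mx d ->
  form u u = \sum_j ((u *m invmx M) 0 j) ^+ 2 * d 0 j.
Proof.
move=> uM hD; rewrite -[u in LHS](mulmxKV uM) trmx_mul.
rewrite -!mulmxA [M *m (_ *m _)]mulmxA [M *m _ *m _]mulmxA hD.
rewrite !mulmxA mul_mx_diag !mxE; apply: eq_bigr => j _.
by rewrite !mxE expr2 mulrAC.
Qed.

Lemma signature_nonpos_comb (W : 'M[R]_(p.+1, N)) : has_signature p S ->
  exists2 c : 'rV_(p.+1), c != 0 &
    form (c *m W) (c *m W) <= 0 /\ (form (c *m W) (c *m W) = 0 -> c *m W = 0).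
Proof.
case=> le_pN [_ [M [uM hD]]].
pose C : 'M_(p.+1, p) := \matrix_(k, i) (W *m invmx M) k (widen_ord le_pN i).
have : kermx C != 0.
  by rewrite kermx_eq0 -row_leq_rank -ltnNge ltnS rank_leq_col.
case/matrix0Pn => k [j0 kerC_kj0].
set c := row k (kermx C).
exists c; first by apply/matrix0Pn; exists 0, j0; rewrite mxE.
have cC : c *m C = 0 by rewrite -row_mul mulmx_ker row0.
set z := c *m W *m invmx M.
have z_low (j : 'I_N) : (j < p)%N -> z 0 j = 0.
  move=> lt_jp; have -> : j = widen_ord le_pN (Ordinal lt_jp) by apply: val_inj.
  have : (c *m C) 0 (Ordinal lt_jp) = 0 by rewrite cC mxE.
  by move <-; rewrite /z -mulmxA !mxE; apply: eq_bigr => i _; rewrite !mxE.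
set d := \row_(i < N) (if (i < p)%N then 1 else -1) : 'rV[R]_N.
have formE := form_diag (c *m W) uM hD; rewrite -/z in formE.
have term_le0 j : z 0 j ^+ 2 * d 0 j <= 0.
  rewrite [d 0 j]mxE; case: (ltnP j p) => [/z_low -> | _]; first by rewrite expr0n mul0r.
  by rewrite mulrN1 oppr_le0 sqr_ge0.
split; first by rewrite formE sumr_le0.
move=> form0; apply: (can_inj (mulmxKV uM)); rewrite mul0mx -/z.
have terms0 : \sum_j - (z 0 j ^+ 2 * d 0 j) = 0 by rewrite sumrN -formE form0 oppr0.
apply/rowP => j; rewrite [RHS]mxE; case: (ltnP j p) => [/z_low // | le_pj].
have terms_ge0 i : true -> 0 <= - (z 0 i ^+ 2 * d 0 i) by rewrite oppr_ge0.
have /eqP := psumr_eq0P terms_ge0 terms0 (i := j) isT.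
by rewrite [d 0 j]mxE ltnNge le_pj mulrN1 opprK sqrf_eq0 => /eqP.
Qed.

End Signature.

Lemma sqr_add_gt0 (R : realDomainType) (s t : R) :
  (s != 0) || (t != 0) -> 0 < s ^+ 2 + t ^+ 2.
Proof.
move=> st_nz; rewrite lt_def addr_ge0 ?sqr_ge0 // andbT.
by rewrite paddr_eq0 ?sqr_ge0 // !sqrf_eq0 negb_and.
Qed.

Section SymmetricForm.
Variables (R : rcfType) (n : nat) (G : 'M[int]_n).
Hypothesis G_sym : G^T = G.
Local Notation q := (@gform R n G).
Local Notation vv := (vv R n).
Implicit Types (u w x y : gam R n).

Lemma gformC u w : q u w = q w u.
Proof.
have gram_sym : (intmx R (gram_full G))^T = intmx R (gram_full G).
  rewrite /intmx map_trmx /gram_full tr_block_mx G_sym !trmx0.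
  by congr (map_mx _ (block_mx _ _ _ _)); apply/matrixP => i j; rewrite !mxE eq_sym.
by rewrite /gform -[LHS]trace_mx11 -mxtrace_tr !trmx_mul trmxK gram_sym mulmxA trace_mx11.
Qed.

Lemma gform_comb x y a b c d :
  q (a *: x + b *: y) (c *: x + d *: y) =
  a * c * q x x + (a * d + b * c) * q x y + b * d * q y y.
Proof. by rewrite !(gformDl, gformDr, gformZl, gformZr) (gformC y x); ring. Qed.

Lemma posdef_pair_orth u w :
  q u u = q w w -> q u w = 0 -> 0 < q u u -> posdef_pair q u w.
Proof.
move=> uu_ww uw0 uu_pos a b ab_nz.
rewrite gform_comb uw0 -uu_ww mulr0 addr0 -mulrDl -!expr2.
exact: mulr_gt0 (sqr_add_gt0 ab_nz) uu_pos.
Qed.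

(* Otherwise x, y, om and v would span a 4-space on which the form is positive
   semidefinite with radical R v, which signature 3 forbids. *)
Lemma Gr21_not_orth_vv x y om :
  has_signature 3 (intmx R (gram_full G)) -> in_Gr21 G x y om -> q om vv = 0 ->
  (q x vv != 0) || (q y vv != 0).
Proof.
move=> sig [xy_pos [x_om [y_om om_pos]]] om_vv.
rewrite -negb_and; apply/negP => /andP[/eqP x_vv /eqP y_vv].
pose W : 'M[R]_(4, n + 2) := \matrix_(k < 4) tnth [tuple x; y; om; vv] k.
have [c c_nz [cW_le0 cW_eq0]] := signature_nonpos_comb W sig.
rewrite -/(gform G _ _) in cW_le0 cW_eq0.
have cWE : c *m W = c 0 0 *: x + c 0 1 *: y + c 0 2 *: om + c 0 3 *: vv.
  rewrite mulmx_sum_row !big_ord_recl big_ord0 addr0 !rowK /= !addrA.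
  by congr (c 0 _ *: _ + c 0 _ *: _ + c 0 _ *: _ + c 0 _ *: _); apply: val_inj.
rewrite {}cWE in cW_le0 cW_eq0.
set p2 := c 0 0 *: x + c 0 1 *: y in cW_le0 cW_eq0.
have p2_om : q p2 om = 0 by rewrite gformDl !gformZl x_om y_om !mulr0 addr0.
have p2_vv : q p2 vv = 0 by rewrite gformDl !gformZl x_vv y_vv !mulr0 addr0.
have p2_pos : (c 0 0 != 0) || (c 0 1 != 0) -> 0 < q p2 p2 := xy_pos _ _.
have p2_0 : c 0 0 = 0 -> c 0 1 = 0 -> p2 = 0.
  by rewrite /p2 => -> ->; rewrite !scale0r addr0.
clearbody p2.
have qE : q (p2 + c 0 2 *: om + c 0 3 *: vv) (p2 + c 0 2 *: om + c 0 3 *: vv) =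
    q p2 p2 + c 0 2 ^+ 2 * q om om.
  rewrite !(gformDl, gformDr, gformZl, gformZr) (gformC om p2) (gformC vv p2).
  rewrite (gformC vv om) p2_om p2_vv om_vv gform_vv_vv; ring.
rewrite qE in cW_le0 cW_eq0.
have om_term_ge0 : 0 <= c 0 2 ^+ 2 * q om om by rewrite mulr_ge0 ?sqr_ge0 ?ltW.
have [/p2_pos p2_gt0 | ] := boolP ((c 0 0 != 0) || (c 0 1 != 0)); first lra.
rewrite negb_or !negbK => /andP[/eqP c0 /eqP c1].
rewrite (p2_0 c0 c1) gform0l add0r in cW_le0 cW_eq0.
have c2 : c 0 2 = 0.
  apply/eqP; rewrite -sqrf_eq0 eq_le sqr_ge0 andbT.
  by rewrite -(pmulr_lle0 _ om_pos).
have cW0 : 0 + c 0 2 *: om + c 0 3 *: vv = 0.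
  by apply: cW_eq0; rewrite c2 expr0n mul0r.
have c3 : c 0 3 = 0.
  have := congr1 (q^~ (vvs R n)) cW0.
  by rewrite c2 scale0r !add0r gformZl gform_vv_vvs mulr1 gform0l.
move/eqP: c_nz; apply; apply/rowP => -[[|[|[|[|//]]]] i]; rewrite mxE.
- by rewrite -c0; congr (c 0 _); apply: val_inj.
- by rewrite -c1; congr (c 0 _); apply: val_inj.
- by rewrite -c2; congr (c 0 _); apply: val_inj.
- by rewrite -c3; congr (c 0 _); apply: val_inj.
Qed.

Lemma same_oplane_orth x y u w z :
  same_oplane (x, y) (u, w) -> q x z = 0 -> q y z = 0 -> q u z = 0 /\ q w z = 0.
Proof.
case=> [a [b [c [d [/= -> [-> _]]]]]] xz yz.
by rewrite !gformDl !gformZl xz yz !mulr0 addr0.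
Qed.

(* Gram--Schmidt in the plane: [e2] spans the kernel of [q _ v] and [e1] is
   rescaled so that [(e1, e2)] is a conformal basis with the orientation of [(x, y)]. *)
Lemma conformal_basis x y v : posdef_pair q x y -> (q x v != 0) || (q y v != 0) ->
  exists e1 e2, same_oplane (x, y) (e1, e2) /\
    [/\ q e1 e1 = q e2 e2, q e1 e2 = 0, 0 < q e1 e1, q e2 v = 0 & q e1 v != 0].
Proof.
move=> xy_pos v_nz; have ab_pos := sqr_add_gt0 v_nz.
set al := q x v in v_nz ab_pos *; set be := q y v in v_nz ab_pos *.
set e2 := (- be) *: x + al *: y.
have e2_pos : 0 < q e2 e2 by apply: xy_pos; rewrite oppr_eq0 orbC.
set t := q (al *: x + be *: y) e2 / q e2 e2.
have tE : t * q e2 e2 = q (al *: x + be *: y) e2 by rewrite divfK ?gt_eqF.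
set c := al + t * be; set d := be - t * al.
have cd_v : al * c + be * d = al ^+ 2 + be ^+ 2 by rewrite /c /d; ring.
have cd_nz : (c != 0) || (d != 0).
  rewrite -negb_and; apply/negP => /andP[/eqP c0 /eqP d0].
  by move: cd_v ab_pos; rewrite c0 d0 !mulr0 addr0 => <-; rewrite ltxx.
set f := c *: x + d *: y.
have f_pos : 0 < q f f := xy_pos c d cd_nz.
have f_e2 : q f e2 = 0.
  rewrite -(subrr (q (al *: x + be *: y) e2)) -{2}tE /f /c /d /e2 !gform_comb; ring.
set lam := Num.sqrt (q e2 e2 / q f f).
have lam_pos : 0 < lam by rewrite sqrtr_gt0 divr_gt0.
have lam2 : lam ^+ 2 = q e2 e2 / q f f by rewrite sqr_sqrtr // ltW // divr_gt0.
have e1e1 : q (lam *: f) (lam *: f) = q e2 e2.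
  by rewrite gformZl gformZr mulrA -expr2 lam2 divfK ?gt_eqF.
have e1_v : q (lam *: f) v = lam * (al ^+ 2 + be ^+ 2).
  by rewrite gformZl /f gformDl !gformZl -/al -/be -cd_v; ring.
exists (lam *: f), e2; split; last split => //.
- exists (lam * c), (lam * d), (- be), al; split => //=.
    by rewrite /f scalerDr !scalerA.
  by rewrite mulrN opprK -!mulrA -mulrDr [d * _]mulrC [c * _]mulrC cd_v mulr_gt0.
- by rewrite gformZl f_e2 mulr0.
- by rewrite e1e1.
- by rewrite /e2 gformDl !gformZl -/al -/be; ring.
- by rewrite e1_v mulf_neq0 ?gt_eqF.
Qed.

Lemma periodP (s : gam R[i] n) :
  period G s <->
  [/\ q (ReG s) (ReG s) = q (ImG s) (ImG s), q (ReG s) (ImG s) = 0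
    & 0 < q (ReG s) (ReG s)].
Proof.
have Re_sconj : ReG (s + conjG s) = ReG s + ReG s by rewrite ReGD ReG_conj.
have Im_sconj : ImG (s + conjG s) = 0 by rewrite ImGD ImG_conj addrN.
have dblE : q (ReG s + ReG s) (ReG s + ReG s) = 4%:R * q (ReG s) (ReG s).
  by rewrite !(gformDl, gformDr); ring.
split.
  case=> ss0 [r [rE r_pos]].
  have := congr1 (@complex.Re R) ss0; have := congr1 (@complex.Im R) ss0.
  have := congr1 (@complex.Re R) rE.
  rewrite !Re_gform Im_gform Re_sconj Im_sconj gform0l subr0 dblE (gformC (ImG s)) /=.
  by move=> ? ? ?; split; lra.
case=> ReIm_eq ReIm0 Re_pos; split.
  apply/eqP; rewrite eq_complex Re_gform Im_gform ReIm_eq (gformC (ImG s)) ReIm0.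
  by rewrite subrr addr0 !eqxx.
exists (q (ReG s + ReG s) (ReG s + ReG s)); split; last by rewrite dblE mulr_gt0.
apply/eqP; rewrite eq_complex Re_gform Im_gform Re_sconj Im_sconj.
by rewrite !gform0l !gform0r subr0 addr0 !eqxx.
Qed.

Lemma exists_period_basis x y om :
  has_signature 3 (intmx R (gram_full G)) -> in_Gr21 G x y om -> q om vv = 0 ->
  exists s : gam R[i] n, period G s /\ same_oplane (x, y) (ReG s, ImG s) /\
    q (ImG s) vv = 0 /\ q (ReG s) vv != 0.
Proof.
move=> sig Gr om_vv; have [xy_pos _] := Gr.
have [e1 [e2 [xy_e [e1e2 e1_e2 e1_pos e2_vv e1_vv]]]] :=
  conformal_basis xy_pos (Gr21_not_orth_vv sig Gr om_vv).
exists (cplx e1 e2); rewrite ReG_cplx ImG_cplx; split => //.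
by apply/periodP; rewrite ReG_cplx ImG_cplx.
Qed.

End SymmetricForm.

Section OrientedPlanes.
Variables (R : rcfType) (m m' : nat).
Implicit Types (x y u w : 'rV[R]_m).

Lemma same_oplane_refl x y : same_oplane (x, y) (x, y).
Proof.
by exists 1, 0, 0, 1; rewrite !scale1r !scale0r addr0 add0r mulr1 mulr0 subr0 ltr01.
Qed.

Lemma same_oplane_scale x y u w (c : R) :
  c != 0 -> same_oplane (x, y) (u, w) -> same_oplane (x, y) (c *: u, c *: w).
Proof.
move=> c_nz [a [b [a' [b' [/= -> [-> det_pos]]]]]].
exists (c * a), (c * b), (c * a'), (c * b'); rewrite !scalerDr !scalerA; split=> //.
have -> : c * a * (c * b') - c * b * (c * a') = c ^+ 2 * (a * b' - b * a') by ring.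
by rewrite mulr_gt0 // lt_def sqr_ge0 sqrf_eq0 c_nz.
Qed.

Lemma same_oplane_map (f : 'rV[R]_m -> 'rV[R]_m') x y u w :
  (forall a b x y, f (a *: x + b *: y) = a *: f x + b *: f y) ->
  same_oplane (x, y) (u, w) -> same_oplane (f x, f y) (f u, f w).
Proof.
move=> f_lin [a [b [a' [b' [/= -> [-> det_pos]]]]]].
by exists a, b, a', b'; rewrite !f_lin.
Qed.

End OrientedPlanes.

Definition xi_gamma1 (R : rcfType) (n : nat) (G : 'M[int]_n) (B u : gam R n) :=
  xi (embU u - gform G u B *: ww R n).

Section Mirror.
Variables (R : rcfType) (n : nat) (G : 'M[int]_n).
Hypothesis G_sym : G^T = G.
Variables (om B : gam R n) (s : gam R[i] n).
Local Open Scope complex_scope.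
Local Notation q := (gform G).
Local Notation vv := (vv R n).
Local Notation vvs := (vvs R n).
Local Notation e1 := (ReG s).
Local Notation e2 := (ImG s).
Local Notation r := (q e1 vv).
Local Notation sd := (sigma_dual G s om B).
Local Notation Bd := (ReG (Bom_dual G s B)).
Local Notation omd := (ImG (Bom_dual G s B)).

Local Ltac parts := rewrite ?(partG'_xi, partU'_xi, partU_xi,
    lsubmxD, lsubmxN, lsubmxZ, rsubmxD, rsubmxN, rsubmxZ,
    partG'_embU, partU'_embU, partU_embU, partG'_ww, partU'_ww, partU_ww,
    partG'_wws, partU'_wws, partU_wws,
    lsubmx_pr, rsubmx_pr, lsubmx_vv, rsubmx_vv, lsubmx_vvs, rsubmx_vvs).
Local Ltac entries := apply/rowP => ?; rewrite !mxE.
Local Ltac entries2 := apply/rowP => -[[|[|//]] ?]; rewrite !mxE /=.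

Lemma xi_gamma1_comb a b x y :
  xi_gamma1 G B (a *: x + b *: y) = a *: xi_gamma1 G B x + b *: xi_gamma1 G B y.
Proof.
apply: gamU_eq; rewrite /xi_gamma1 gformDl !gformZl; parts.
- by entries; ring.
- by entries2; ring.
- by entries2; ring.
Qed.

Let inv2C : (2^-1 : R[i]) = (2^-1 : R)%:C.
Proof. by rewrite fmorphV rmorph_nat. Qed.
Let Re_realM (k : R) (z : R[i]) : complex.Re (k%:C * z) = k * complex.Re z.
Proof. by case: z => a b /=; rewrite mul0r subr0. Qed.
Let Im_realM (k : R) (z : R[i]) : complex.Im (k%:C * z) = k * complex.Im z.
Proof. by case: z => a b /=; rewrite mul0r addr0. Qed.

Lemma ReG_sigma_dual :
  ReG sd = r^-1 *: (pr B - (2^-1 * (q B B - q om om)) *: vv + vvs).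
Proof.
rewrite /sigma_dual /= ReGZ /= scale0r subr0 ReGD ReGB ReG_pr ReG_cplx ReGZ.
by rewrite ImG_vv ReG_vv ReG_vvs scaler0 subr0 inv2C Re_realM Re_gform ReG_cplx ImG_cplx.
Qed.

Lemma ImG_sigma_dual :
  ImG sd = r^-1 *: (pr om - (2^-1 * (q B om + q om B)) *: vv).
Proof.
rewrite /sigma_dual /= ImGZ /= scale0r addr0 ImGD ImGB ImG_pr ImG_cplx ImGZ.
by rewrite ImG_vv ReG_vv ImG_vvs scaler0 add0r addr0 inv2C Im_realM Im_gform ReG_cplx ImG_cplx.
Qed.

Lemma ReG_Bom_dual : Bd = r^-1 *: (pr e1 - q e1 B *: vv).
Proof.
rewrite /Bom_dual ReGZ /= scale0r subr0 ReGB ReG_pr ReGZ ImG_vv ReG_vv scaler0 subr0.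
by rewrite Re_gform ReG_cplx ImG_cplx gform0r subr0.
Qed.

Lemma ImG_Bom_dual : omd = r^-1 *: (pr e2 - q e2 B *: vv).
Proof.
rewrite /Bom_dual ImGZ /= scale0r addr0 ImGB ImG_pr ImGZ ImG_vv ReG_vv scaler0 add0r.
by rewrite Im_gform ReG_cplx ImG_cplx gform0r add0r.
Qed.

Hypotheses (om_vv : q om vv = 0) (B_vv : q B vv = 0) (om_pos : 0 < q om om).
Hypothesis s_period : period G s.
Hypotheses (e2_vv : q e2 vv = 0) (r_nz : r != 0) (e1_om : q e1 om = 0) (e2_om : q e2 om = 0).

Let e1e2 : q e1 e1 = q e2 e2. Proof. by case: ((periodP G_sym s).1 s_period). Qed.
Let e1_e2 : q e1 e2 = 0. Proof. by case: ((periodP G_sym s).1 s_period). Qed.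
Let r2_pos : 0 < r ^+ 2. Proof. by rewrite lt_def sqr_ge0 expf_neq0. Qed.
Let e1_pos : 0 < q e1 e1. Proof. by case: ((periodP G_sym s).1 s_period). Qed.

Local Ltac gram_field :=
  rewrite ?ReG_sigma_dual ?ImG_sigma_dual ?ReG_Bom_dual ?ImG_Bom_dual;
  rewrite ?(gformDl, gformDr, gformNl, gformNr, gformZl, gformZr, gform_pr,
    gform_pr_vv, gform_vv_pr, gform_pr_vvs, gform_vvs_pr,
    gform_vv_vv, gform_vvs_vvs, gform_vv_vvs, gform_vvs_vv);
  rewrite ?(gformC G_sym B e1, gformC G_sym B e2, gformC G_sym om B,
    gformC G_sym om e1, gformC G_sym om e2, gformC G_sym e2 e1);
  rewrite ?(om_vv, B_vv, e2_vv, e1_om, e2_om, e1_e2, e1e2); field.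

Lemma dual_plane_gram :
  [/\ q (ReG sd) (ReG sd) = q om om / r ^+ 2, q (ImG sd) (ImG sd) = q om om / r ^+ 2
    & q (ReG sd) (ImG sd) = 0].
Proof. by split; gram_field. Qed.

Lemma dual_omega_gram :
  [/\ q (ReG sd) omd = 0, q (ImG sd) omd = 0 & q omd omd = q e1 e1 / r ^+ 2].
Proof. by split; gram_field. Qed.

Lemma dual_B_gram :
  [/\ q (ReG sd) Bd = - q B vvs / r, q (ImG sd) Bd = - q om vvs / r,
    q omd Bd = - q e2 vvs / r & q Bd Bd = (q e1 e1 - 2 * r * q e1 vvs) / r ^+ 2].
Proof. by split; gram_field. Qed.

Lemma period_sigma_dual : period G sd.
Proof.
have [Re_Re Im_Im Re_Im] := dual_plane_gram.
by apply/(periodP G_sym); rewrite Re_Re Im_Im Re_Im divr_gt0.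
Qed.

Lemma gammaH1_dual : gammaH1 G (ReG sd) (ImG sd) Bd =
  (r^-1 *: xi (gammaH2 G om B).1, r^-1 *: xi (gammaH2 G om B).2).
Proof.
have [Re_Bd Im_Bd _ _] := dual_B_gram.
rewrite /gammaH1 /gammaH2 /= Re_Bd Im_Bd ReG_sigma_dual ImG_sigma_dual.
congr pair; apply: gamU_eq; parts; rewrite ?(rsubmx_gam G) ?B_vv ?om_vv ?(gformC G_sym om B).
all: try by entries; field.
all: by entries2; field.
Qed.

Lemma gammaH2_dual :
  gammaH2 G omd Bd = (r^-1 *: xi_gamma1 G B e1, r^-1 *: xi_gamma1 G B e2).
Proof.
have [_ _ omd_Bd Bd_Bd] := dual_B_gram; have [_ _ omd_omd] := dual_omega_gram.
rewrite /gammaH2 /xi_gamma1 omd_omd omd_Bd Bd_Bd ReG_Bom_dual ImG_Bom_dual.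
congr pair; apply: gamU_eq; parts; rewrite ?(rsubmx_gam G) ?e2_vv.
all: try by entries; field.
all: by entries2; field.
Qed.

Lemma in_Gr21_dual : in_Gr21 G (ReG sd) (ImG sd) omd.
Proof.
have [Re_Re Im_Im Re_Im] := dual_plane_gram.
have [Re_omd Im_omd omd_omd] := dual_omega_gram.
split; first by apply: posdef_pair_orth => //; rewrite ?Re_Re ?Im_Im // divr_gt0.
by rewrite Re_omd Im_omd omd_omd divr_gt0.
Qed.

Lemma mirror_gamma x y : same_oplane (x, y) (e1, e2) ->
  same_pair (xi_tilde (gammaG G x y om B)) (gammaG G (ReG sd) (ImG sd) omd Bd).
Proof.
move=> xy_e; have r_inv_nz : r^-1 != 0 by rewrite invr_eq0.
split=> /=; first by rewrite gammaH1_dual; apply/same_oplane_scale/same_oplane_refl.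
by rewrite gammaH2_dual; apply/same_oplane_scale/(same_oplane_map xi_gamma1_comb).
Qed.

End Mirror.

Theorem mainTheorem14 (R : rcfType) (n : nat) (G : 'M[int]_n)
  (x y om B : gam R n) :
  G^T = G ->
  has_signature 3 (intmx R (gram_full G)) ->
  in_Gr21 G x y om ->
  (exists a : R, om = pr om + a *: vv R n) ->
  (exists a : R, B = pr B + a *: vv R n) ->
  (exists s : gam R[i] n,
      period G s /\ same_oplane (x, y) (ReG s, ImG s) /\
      gform G (ImG s) (vv R n) = 0 /\ gform G (ReG s) (vv R n) != 0)
  /\
  (forall s : gam R[i] n,
      period G s -> same_oplane (x, y) (ReG s, ImG s) ->
      gform G (ImG s) (vv R n) = 0 -> gform G (ReG s) (vv R n) != 0 ->
      let sd := sigma_dual G s om B in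
      let Bd := ReG (Bom_dual G s B) in
      let omd := ImG (Bom_dual G s B) in
      period G sd /\
      in_Gr21 G (ReG sd) (ImG sd) omd /\
      same_pair (xi_tilde (gammaG G x y om B))
                (gammaG G (ReG sd) (ImG sd) omd Bd)).
Proof.
move=> G_sym sig Gr [a om_span] [b B_span].
have om_vv : gform G om (vv R n) = 0 by rewrite om_span gform_prDvv_vv.
have B_vv : gform G B (vv R n) = 0 by rewrite B_span gform_prDvv_vv.
split; first exact (exists_period_basis G_sym sig Gr om_vv).
move=> s s_period xy_s e2_vv e1_vv /=.
have [_ [x_om [y_om om_pos]]] := Gr.
have [e1_om e2_om] := same_oplane_orth xy_s x_om y_om.
split; first exact: period_sigma_dual.
split; first exact: in_Gr21_dual.
exact: mirror_gamma.
Qed.
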